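(* Let $d\ge1$, $r\ge1$, $n\ge d+2$, and let $K$ be a set of $d$-simplices of $K_n^d$ such that every $d$-hypercut $H$ satisfies $|\mathrm{Supp}(H)\cap K|\ge r$. Then the facet graph $G_d(K)$ is $(d+r-1)$-connected.
   Context: Fix a field $\mathbb F$. A $d$-simplex is a $(d+1)$-element subset of $[n]$ oriented by increasing order; $K_n^d$ is the complex of all subsets of $[n]$ of size at most $d+1$. For a simplex $\rho$ and $\tau=\rho\setminus\{p\}$ with $p$ the $i$-th smallest element of $\rho$, $\mathrm{sign}(\rho,\tau)=(-1)^{i-1}$. A $d$-cochain is a formal $\mathbb F$-combination of $d$-simplices; the coboundary is $\delta\tau=\sum_{p\in[n]\setminus\tau}\mathrm{sign}(\tau\cup\{p\},\tau)(\tau\cup\{p\})$, extended linearly. A $d$-cocycle is a $d$-cochain $Z$ with $\delta Z=0$; a $d$-hypercut is a nonzero $d$-cocycle $H$ such that every $d$-cocycle supported in $\mathrm{Supp}(H)$ is a scalar multiple of $H$. The facet graph $G_d(K)$ has vertex set $K$, two $d$-simplices adjacent iff they share a $(d-1)$-face. A graph is $k$-connected if deleting any set of fewer than $k$ of its vertices leaves a nonempty connected graph. *)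

From HB Require Import structures.
From mathcomp Require Import all_boot all_order all_algebra.
Set Implicit Arguments. Unset Strict Implicit. Unset Printing Implicit Defensive.
Import GRing.Theory.
Local Open Scope ring_scope.

(* Vertices of K_n^d are 'I_n (i.e. [n] = {0,...,n-1}); a simplex is a finite
   set of vertices, oriented by increasing order. *)

Definition is_cochain (F : fieldType) (n d : nat) (f : {ffun {set 'I_n} -> F}) :=
  forall s : {set 'I_n}, #|s| != d.+1 -> f s = 0.

Definition Supp (F : fieldType) (n : nat) (f : {ffun {set 'I_n} -> F})
  : {set {set 'I_n}} := [set s | f s != 0].

(* sign(rho, rho \ {p}) = (-1)^(i-1), p the i-th smallest element of rho:
   i-1 is the number of elements of rho smaller than p. *)
Definition simplex_sign (F : fieldType) (n : nat) (rho : {set 'I_n}) (p : 'I_n) : F :=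
  (-1) ^+ #|[set q in rho | (q < p)%N]|.

(* coefficient of the (d+1)-simplex rho in delta f, where
   delta tau = sum_{p notin tau} sign(tau u {p}, tau) (tau u {p}). *)
Definition coboundary_at (F : fieldType) (n : nat) (f : {ffun {set 'I_n} -> F})
  (rho : {set 'I_n}) : F :=
  \sum_(p in rho) simplex_sign F rho p * f (rho :\ p).

Definition is_cocycle (F : fieldType) (n d : nat) (f : {ffun {set 'I_n} -> F}) :=
  is_cochain d f /\
  forall rho : {set 'I_n}, #|rho| = d.+2 -> coboundary_at f rho = 0.

Definition is_hypercut (F : fieldType) (n d : nat) (H : {ffun {set 'I_n} -> F}) :=
  is_cocycle d H /\ (exists s, H s != 0) /\
  forall Z : {ffun {set 'I_n} -> F}, is_cocycle d Z ->
    Supp Z \subset Supp H -> exists c : F, forall s, Z s = c * H s.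

Definition facet_adj (n d : nat) (s t : {set 'I_n}) : bool :=
  (s != t) && [exists f : {set 'I_n}, [&& #|f| == d, f \subset s & f \subset t]].

Definition induced_rel (T : finType) (e : rel T) (V : {set T}) : rel T :=
  [rel x y | [&& x \in V, y \in V & e x y]].

Definition connected_graph (T : finType) (e : rel T) (V : {set T}) : Prop :=
  V != set0 /\ forall x y, x \in V -> y \in V -> connect (induced_rel e V) x y.

Definition k_connected (T : finType) (e : rel T) (V : {set T}) (k : nat) : Prop :=
  forall S : {set T}, S \subset V -> (#|S| < k)%N -> connected_graph e (V :\: S).

(* For a (d-2)-face [rho] and a proper nonempty set [X] of the vertices
   outside [rho], the d-simplices containing [rho] and meeting [X] in exactly
   one vertex carry a nonzero cocycle, hence contain the support of a
   hypercut; so at least [r] of them lie in [K].  This cut condition passes to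
   the link of a vertex, which lowers d by one, and both halves of
   k-connectivity follow by induction on d.  Every vertex lies in at least
   d+r-1 simplices of [K].  Deleting a set [S] of fewer than d+r-1 simplices
   cannot disconnect [K]: for d = 1 a separated component would make the
   simplices crossing its vertex set, at least [r] of them, all lie in [S];
   for larger d, every remaining simplex has a vertex [u] through which so
   few simplices of [S] pass that the link of [u] stays connected; two such
   vertices [u], [v] in different components would force all simplices through
   both [u] and [v] into [S], but by the degree bound in the link of [u] there
   are more of these than simplices of [S] through [u]. *)

From HB Require Import structures.
From mathcomp Require Import all_boot all_order all_algebra zify ring.
From Stdlib Require Import Classical_Prop.
Set Implicit Arguments. Unset Strict Implicit. Unset Printing Implicit Defensive.
Import GRing.Theory.

Section InducedConnectivity.
Variables (T : finType) (e : rel T).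
Implicit Types (A C : {set T}) (x y : T).

Definition closed_in (A C : {set T}) :=
  forall x y, x \in C -> y \in A -> e x y -> y \in C.

Lemma closed_connect A (A' : {set T}) C x y :
  A' \subset A -> closed_in A C -> x \in C ->
  connect (induced_rel e A') x y -> y \in C.
Proof.
move=> sA'A clC xC /connectP[p]; elim: p x xC => [|z p IH] x xC /=.
  by move=> _ ->.
case/andP=> /and3P[_ zA' exz] pz yE.
exact: IH (clC x z xC (subsetP sA'A z zA') exz) pz yE.
Qed.

Lemma connect_of_closed A x y : x \in A -> y \in A ->
  (forall C, C \subset A -> closed_in A C -> x \in C -> y \in C) ->
  connect (induced_rel e A) x y.
Proof.
move=> xA yA hC.
suff : y \in [set z in A | connect (induced_rel e A) x z] by rewrite inE => /andP[].
apply: hC.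
- by apply/subsetP=> z; rewrite inE => /andP[].
- move=> t s; rewrite !inE => /andP[tA xt] sA ets; rewrite sA.
  by apply: connect_trans xt (connect1 _); rewrite /induced_rel /= tA sA.
- by rewrite inE xA connect0.
Qed.

End InducedConnectivity.

Section Links.
Variable n : nat.
Implicit Types (u v z : 'I_n) (B V rho X s t : {set 'I_n}).
Implicit Types (K S C : {set {set 'I_n}}).

Definition star K u := [set s in K | u \in s].

Definition crossing K rho X :=
  [set s in K | (rho \subset s) && (#|s :&: X| == 1)].

(* [K] is a pure [d]-dimensional complex in the link of the face [B], on the
   vertex set [V]; the last clause is what the hypercut condition yields, the
   simplices containing [rho] and meeting [X] once containing the support of
   a hypercut. *)
Definition cut_link B V d r K :=
  [/\ [disjoint B & V],
      {in K, forall s, [/\ B \subset s, s \subset B :|: V & #|s| = #|B| + d.+1]},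
      d + 2 <= #|V| &
      forall rho X, B \subset rho -> rho \subset B :|: V ->
        #|rho| + 1 = #|B| + d -> X \subset V :\: rho -> X != set0 ->
        X != V :\: rho -> r <= #|crossing K rho X|].

Lemma star_sub K u : star K u \subset K.
Proof. by apply/subsetP=> s; rewrite inE => /andP[]. Qed.

Lemma link_vertex B V s k :
  B \subset s -> s \subset B :|: V -> #|s| = #|B| + k.+1 ->
  exists z, [/\ z \in s, z \notin B & z \in V].
Proof.
move=> Bs sBV cs; have : 0 < #|s :\: B| by rewrite cardsDS // cs addnS subSn ?leq_addr.
case/card_gt0P=> z; rewrite inE => /andP[zB zs]; exists z; split => //.
by move: (subsetP sBV z zs); rewrite inE (negbTE zB).
Qed.

Lemma facet_adj_share_vertex B s t z : s != t -> B \subset s -> B \subset t ->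
  z \in s -> z \in t -> z \notin B -> facet_adj (#|B| + 1) s t.
Proof.
move=> st Bs Bt zs zt zB; rewrite /facet_adj st; apply/existsP; exists (z |: B).
by rewrite cardsU1 zB add1n addn1 eqxx !subUset !sub1set zs zt Bs Bt.
Qed.

Lemma cut_link_star B V d r K u : u \in V ->
  cut_link B V d.+1 r K -> cut_link (u |: B) (V :\ u) d r (star K u).
Proof.
move=> uV [dBV hK hV hcut].
have uB : u \notin B by rewrite (disjointFl dBV uV).
have cardB : #|u |: B| = #|B|.+1 by rewrite cardsU1 uB.
have eBV : (u |: B) :|: (V :\ u) = B :|: V.
  by apply/setP=> z; rewrite !inE; case: eqVneq => [->|]; rewrite ?uV ?orbT.
split.
- rewrite disjoints_subset; apply/subsetP=> z; rewrite !inE.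
  case/orP=> [/eqP->|zB]; first by rewrite eqxx.
  by rewrite (disjointFr dBV zB) andbF.
- move=> s; rewrite inE => /andP[sK us]; have [Bs sBV cs] := hK s sK.
  by rewrite subUset sub1set us Bs eBV cardB addSnnS.
- by rewrite (cardsD1 u V) uV add1n addSn ltnS in hV.
- move=> rho X Brho rhoBV crho XV X0 XnV.
  have urho : u \in rho by apply: (subsetP Brho); rewrite setU11.
  have eV : (V :\ u) :\: rho = V :\: rho.
    by apply/setP=> z; rewrite !inE; case: eqVneq => [->|]; rewrite ?urho ?andbF.
  have -> : crossing (star K u) rho X = crossing K rho X.
    apply/setP=> s; rewrite !inE andbAC.
    case: (boolP (rho \subset s)) => rhos /=; rewrite ?andbF //.
    by rewrite (subsetP rhos u urho) andbT.
  apply: hcut; rewrite -?eV -?eBV //; first exact: subset_trans (subsetUr _ _) Brho.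
  by rewrite cardB addSnnS in crho.
Qed.

Lemma card_star_cut_link d B V r K v : 0 < d -> 0 < r ->
  cut_link B V d r K -> v \in V -> d + r - 1 <= #|star K v|.
Proof.
elim: d B V K v => [//|[|d] IH] B V K v _ r0 hL vV.
- case: hL => dBV hK hV hcut.
  have -> : star K v = crossing K B [set v].
    apply/setP=> s; rewrite !inE; case: (boolP (s \in K)) => //= sK.
    have [-> _ _] := hK s sK; rewrite /=.
    case: (boolP (v \in s)) => vs.
      by rewrite (setIidPr _) ?sub1set ?cards1.
    by rewrite (disjoint_setI0 _) ?cards0 // disjoint_sym disjoints1.
  have eVB : V :\: B = V by apply/setDidPl; rewrite disjoint_sym.
  rewrite add1n subSS subn0; apply: hcut; rewrite ?eVB ?sub1set ?subsetUl //.
    by apply/set0Pn; exists v; rewrite inE.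
  by apply: contraTneq hV => <-; rewrite cards1.
- rewrite leqNgt; apply/negP => small.
  have star_link u : u \in V -> u != v -> d.+1 + r - 1 <= #|star (star K u) v|.
    move=> uV uv; apply: (IH _ _ _ v isT r0 (cut_link_star uV hL)).
    by rewrite !inE eq_sym uv.
  have sub_star u : star (star K u) v \subset star K v.
    by apply/subsetP=> s; rewrite !inE => /andP[/andP[-> _] ->].
  have star_in u : u \in V -> u != v -> star K v \subset star K u.
    move=> uV uv; apply: subset_trans (star_sub _ v).
    rewrite (_ : star K v = star (star K u) v) ?subxx //; apply/eqP.
    rewrite eq_sym eqEcard sub_star; apply: leq_trans (star_link u uV uv); lia.
  case: hL => dBV hK hV hcut.
  have [u uV uv] : exists2 u, u \in V & u != v.
    have : 1 < #|V| by apply: leq_trans hV; rewrite addn2.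
    rewrite (cardsD1 v V) vV add1n ltnS card_gt0 => /set0Pn[u].
    by rewrite !inE => /andP[uv uV]; exists u.
  have : 0 < #|star K v|.
    apply: leq_trans (leq_trans _ (star_link u uV uv)) (subset_leq_card (sub_star u)).
    by rewrite addSn subn1 ltn_addl.
  case/card_gt0P=> s; rewrite inE => /andP[sK vs].
  have [Bs _ cs] := hK s sK.
  have Vs : V \subset s.
    apply/subsetP=> w wV; case: (eqVneq w v) => [->//|wv].
    by have := subsetP (star_in w wV wv) s; rewrite !inE sK vs => /(_ isT).
  have := subset_leq_card (_ : B :|: V \subset s); rewrite subUset Bs Vs => /(_ isT).
  rewrite cardsU (disjoint_setI0 dBV) cards0 subn0 cs; lia.
Qed.

Lemma exists_vertex_small_star B k K S s :
  {in K, forall t, B \subset t /\ #|t| = #|s|} -> S \subset K ->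
  s \in K :\: S -> #|B| < #|s| -> #|S| <= k -> 0 < k ->
  exists2 u, u \in s :\: B & #|star S u| < k.
Proof.
move=> hK SK /setDP[sK sS] Bs Sk k0.
apply/exists_inP; apply: contraTT sS => /exists_inPn large.
have full u : u \in s :\: B -> star S u = S.
  move=> us; apply/eqP; rewrite eqEcard star_sub.
  by apply: leq_trans Sk _; rewrite leqNgt large.
have [u us] : exists u, u \in s :\: B.
  by apply/card_gt0P; rewrite cardsDS ?subn_gt0 //; exact: (hK s sK).1.
have [t tS] : exists t, t \in S.
  apply/card_gt0P; rewrite -(full u us); apply: leq_trans k0 _.
  by rewrite leqNgt large.
have [Bt ct] := hK t (subsetP SK t tS).
rewrite negbK; suff -> : s = t by [].
apply/eqP; rewrite eqEcard ct leqnn andbT; apply/subsetP=> z zs.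
have [zB|zB] := boolP (z \in B); first exact: subsetP Bt z zB.
have zsB : z \in s :\: B by rewrite inE zB zs.
by move: tS; rewrite -(full z zsB) inE => /andP[].
Qed.

Lemma cut_link1_closed B V r K S C x y :
  cut_link B V 1 r K -> S \subset K -> #|S| < r ->
  C \subset K :\: S -> closed_in (facet_adj (#|B| + 1)) (K :\: S) C ->
  x \in C -> y \in K :\: S -> y \in C.
Proof.
case=> dBV hK _ hcut SK Sr CKS clC xC yKS; apply/contraT => yC.
have inK t : t \in K :\: S -> t \in K by case/setDP.
have via_vertex t s z : t \in C -> s \in K :\: S -> z \in t -> z \in s -> z \in V ->
    s \in C.
  move=> tC sKS zt zs zV; have [<-//|ts] := eqVneq t s.
  have [Bt _ _] := hK t (inK t (subsetP CKS t tC)).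
  have [Bs _ _] := hK s (inK s sKS).
  apply: clC tC sKS _; apply: facet_adj_share_vertex ts Bt Bs zt zs _.
  by rewrite (disjointFl dBV zV).
pose X := [set z in V | [exists t in C, z \in t]].
have eVB : V :\: B = V by apply/setDidPl; rewrite disjoint_sym.
have XV : X \subset V :\: B by rewrite eVB; apply/subsetP=> z; rewrite inE => /andP[].
have X0 : X != set0.
  have [Bx sBVx cx] := hK x (inK x (subsetP CKS x xC)).
  have [z [zx _ zV]] := link_vertex Bx sBVx cx.
  by apply/set0Pn; exists z; rewrite inE zV; apply/exists_inP; exists x.
have XnV : X != V :\: B.
  have [By sBVy cy] := hK y (inK y yKS).
  have [z [zy zB zV]] := link_vertex By sBVy cy.
  apply: contra yC => /eqP XE.
  have : z \in X by rewrite XE inE zB zV.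
  by rewrite inE => /andP[_ /exists_inP[t tC zt]]; exact: via_vertex zt zy zV.
(* A surviving simplex meeting [X] once would join [C] and then meet [X] twice. *)
have crossS : crossing K B X \subset S.
  apply/subsetP=> s; rewrite inE => /andP[sK /andP[_ /cards1P[z sX]]].
  apply: contraT => sS; have sKS : s \in K :\: S by rewrite inE sS sK.
  have : z \in s :&: X by rewrite sX set11.
  rewrite !inE => /and3P[zs zV /exists_inP[t tC zt]].
  have sC := via_vertex t s z tC sKS zt zs zV.
  have [Bs sBV cs] := hK s sK.
  have : s :\: B \subset s :&: X.
    apply/subsetP=> w; rewrite !inE => /andP[wB ws]; rewrite ws /=.
    have wV : w \in V by move: (subsetP sBV w ws); rewrite inE (negbTE wB).
    by rewrite wV; apply/exists_inP; exists s.
  by move/subset_leq_card; rewrite sX cards1 cardsDS // cs addKn.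
have := leq_trans (hcut B X (subxx B) (subsetUl B V) (erefl _) XV X0 XnV)
  (subset_leq_card crossS).
by rewrite leqNgt Sr.
Qed.

Lemma cut_link_closed_step d B V r K S C x y :
  cut_link B V d.+2 r K -> S \subset K -> #|S| <= d + r -> 0 < r ->
  (forall u, u \in V -> #|star S u| < d + r ->
     {in star K u :\: star S u &, forall s t,
        connect (induced_rel (facet_adj (#|B| + d.+2)) (star K u :\: star S u)) s t}) ->
  C \subset K :\: S -> closed_in (facet_adj (#|B| + d.+2)) (K :\: S) C ->
  x \in C -> y \in K :\: S -> y \in C.
Proof.
move=> hL SK Sdr r0 link_conn CKS clC xC yKS; apply/contraT => yC.
have [dBV hK _ _] := hL.
have in_link u s : u \in s -> s \in K :\: S -> s \in star K u :\: star S u.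
  by move=> us; rewrite !inE us !andbT.
have star_closed u t s : u \in V -> #|star S u| < d + r ->
    t \in C -> u \in t -> s \in K :\: S -> u \in s -> s \in C.
  move=> uV gu tC ut sKS us.
  have sub : star K u :\: star S u \subset K :\: S.
    apply/subsetP=> w; rewrite !inE => /andP[nwS /andP[-> uw]]; rewrite andbT.
    by apply: contra nwS => ->.
  apply: (closed_connect sub clC tC); apply: link_conn => //; apply: in_link => //.
  exact: subsetP CKS t tC.
have good_vertex s : s \in K :\: S ->
    exists2 u, u \in s /\ u \in V & #|star S u| < d + r.
  move=> sKS; have [Bs sBV cs] := hK s (setDP sKS).1.
  have pure : {in K, forall t, B \subset t /\ #|t| = #|s|}.
    by move=> t tK; have [Bt _ ct] := hK t tK; rewrite ct cs.
  have Bs_lt : #|B| < #|s| by rewrite cs addnS ltnS leq_addr.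
  have [u usB gu] := exists_vertex_small_star pure SK sKS Bs_lt Sdr (ltn_addl d r0).
  move: usB; rewrite inE => /andP[uB us]; exists u => //; split => //.
  by move: (subsetP sBV u us); rewrite inE (negbTE uB).
have [u [ux uV] gu] := good_vertex x (subsetP CKS x xC).
have [v [vy vV] gv] := good_vertex y yKS.
have uv : u != v.
  by apply: contra yC => /eqP uv; apply: (star_closed u x) => //; rewrite uv.
have vVu : v \in V :\ u by rewrite !inE eq_sym uv vV.
have := card_star_cut_link (ltn0Sn d) r0 (cut_link_star uV hL) vVu.
(* A surviving simplex through [u] and [v] would join the components of [x] and [y]. *)
have sub : star (star K u) v \subset star S u.
  apply/subsetP=> s; rewrite !inE => /andP[/andP[sK us] vs]; rewrite us andbT.
  apply: contraT => sS; have sKS : s \in K :\: S by rewrite inE sS sK.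
  by apply: contraNT yC => _; apply: (star_closed v s) => //; exact: (star_closed u x).
move/leq_trans/(_ (subset_leq_card sub)).
by rewrite addSn subn1 /= leqNgt gu.
Qed.

Lemma cut_link_connected d B V r K S : 0 < d -> 0 < r ->
  cut_link B V d r K -> S \subset K -> #|S| < d + r - 1 ->
  {in K :\: S &, forall x y,
     connect (induced_rel (facet_adj (#|B| + d)) (K :\: S)) x y}.
Proof.
elim: d B V K S => [//|[|d] IH] B V K S _ r0 hL SK Sdr x y xKS yKS;
  apply: connect_of_closed => // C CKS clC xC.
  rewrite add1n subn1 /= in Sdr; exact: cut_link1_closed hL SK Sdr CKS clC xC yKS.
rewrite !addSn subn1 ltnS /= in Sdr.
apply: (cut_link_closed_step hL SK Sdr r0 _ CKS clC xC yKS) => u uV gu.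
have [dBV _ _ _] := hL.
have <- : #|u |: B| + d.+1 = #|B| + d.+2.
  by rewrite cardsU1 (disjointFl dBV uV) add1n addSnnS.
apply: IH (ltn0Sn d) r0 (cut_link_star uV hL) _ _.
  by apply/subsetP=> s; rewrite !inE => /andP[/(subsetP SK) -> ->].
by rewrite addSn subn1.
Qed.

End Links.

Local Open Scope ring_scope.

Lemma sum_neq0_exists (M : nmodType) (I : finType) (P : pred I) (G : I -> M) :
  \sum_(i | P i) G i != 0 -> exists2 i, P i & G i != 0.
Proof.
move=> nz; apply/exists_inP; apply: contraNT nz => /exists_inPn G0.
by apply/eqP/big1 => i Pi; apply/eqP; rewrite -[_ == _]negbK G0.
Qed.

Lemma sum_ordered_pairs (M : nmodType) n (A : {set 'I_n}) (G : 'I_n -> 'I_n -> M) :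
  \sum_(p in A) \sum_(q in A :\ p) G p q =
  \sum_(p in A) \sum_(q in A | (q < p)%N) (G p q + G q p).
Proof.
have -> : \sum_(p in A) \sum_(q in A :\ p) G p q =
    \sum_(p in A) \sum_(q in A | (q < p)%N) G p q +
    \sum_(p in A) \sum_(q in A | (p < q)%N) G p q.
  rewrite -big_split /=; apply: eq_bigr => p pA.
  rewrite (bigID (fun q : 'I_n => (q < p)%N)) /=; congr (_ + _); apply: eq_bigl => q.
    by rewrite !inE -val_eqE /=; case: ltngtP; rewrite ?andbT ?andbF.
  by rewrite !inE -val_eqE /=; case: ltngtP; rewrite ?andbT ?andbF.
rewrite [X in _ + X](exchange_big_dep (fun q => q \in A)) /=; last by move=> ? ? ? /andP[].
rewrite -big_split /=; apply: eq_bigr => p pA; rewrite big_split /=; congr (_ + _).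
by apply: eq_bigl => q; rewrite pA.
Qed.

Section Cochains.
Variables (F : fieldType) (n : nat).
Implicit Types (rho s tau X : {set 'I_n}) (p q : 'I_n) (g Z H : {ffun {set 'I_n} -> F}).

Lemma simplex_sign_neq0 s p : simplex_sign F s p != 0.
Proof. by rewrite /simplex_sign expf_neq0 // oppr_eq0 oner_eq0. Qed.

Lemma simplex_sign_swap tau p q : p \in tau -> q \in tau -> (q < p)%N ->
  simplex_sign F tau p * simplex_sign F (tau :\ p) q =
  - (simplex_sign F tau q * simplex_sign F (tau :\ q) p).
Proof.
move=> pt qt qp; rewrite /simplex_sign.
have -> : [set t in tau :\ p | (t < q)%N] = [set t in tau | (t < q)%N].
  apply/setP=> t; rewrite !inE; case: (eqVneq t p) => [->|_] //=.
  by rewrite ltnNge (ltnW qp) andbF.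
have -> : [set t in tau | (t < p)%N] = q |: [set t in tau :\ q | (t < p)%N].
  apply/setP=> t; rewrite !inE; case: (eqVneq t q) => [->|_] //=.
  by rewrite qt qp.
rewrite cardsU1 !inE eqxx /= add1n exprS; ring.
Qed.

Lemma coboundary_atK g tau :
  coboundary_at [ffun s : {set 'I_n} => coboundary_at g s] tau = 0.
Proof.
rewrite /coboundary_at; under eq_bigr => p _ do rewrite ffunE mulr_sumr.
rewrite sum_ordered_pairs; apply: big1 => p pt; apply: big1 => q /andP[qt qp].
rewrite [tau :\ q :\ p]setDDl setUC -setDDl !mulrA simplex_sign_swap //; ring.
Qed.

Definition coboundary (d : nat) g : {ffun {set 'I_n} -> F} :=
  [ffun s : {set 'I_n} => if #|s| == d.+1 then coboundary_at g s else 0].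

Lemma coboundary_cocycle (d : nat) g : is_cocycle d (coboundary d g).
Proof.
split=> [s /negbTE s_d|rho rho_d]; first by rewrite ffunE s_d.
rewrite -[RHS](coboundary_atK g rho); apply: eq_bigr => p prho; rewrite !ffunE.
by move: rho_d; rewrite (cardsD1 p rho) prho add1n => -[->]; rewrite eqxx.
Qed.

Lemma cocycleB (d : nat) Z1 Z2 c : is_cocycle d Z1 -> is_cocycle d Z2 ->
  is_cocycle d [ffun s : {set 'I_n} => Z1 s - c * Z2 s].
Proof.
move=> [Z1d dZ1] [Z2d dZ2]; split=> [s sd|rho rho_d].
  by rewrite ffunE Z1d // Z2d // mulr0 subr0.
have -> : coboundary_at [ffun s : {set 'I_n} => Z1 s - c * Z2 s] rho =
    coboundary_at Z1 rho - c * coboundary_at Z2 rho.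
  rewrite /coboundary_at mulr_sumr -sumrB; apply: eq_bigr => p _; rewrite ffunE; ring.
by rewrite dZ1 // dZ2 // mulr0 subr0.
Qed.

Lemma cocycle_hypercut (d : nat) Z : is_cocycle d Z -> (exists s, Z s != 0) ->
  exists H, is_hypercut d H /\ Supp H \subset Supp Z.
Proof.
have [m] := ubnP #|Supp Z|; elim: m Z => // m IH Z hm cZ [s0 Zs0].
case: (classic (exists Z', [/\ is_cocycle d Z', Supp Z' \subset Supp Z &
                            ~ exists c, forall s, Z' s = c * Z s])); last first.
  move=> noZ'; exists Z; split=> //; split=> //; split=> [|Z' cZ' sZ']; first by exists s0.
  by apply: NNPP => nmul; apply: noZ'; exists Z'.
case=> Z' [cZ' sZ' nmul].
pose c := Z' s0 / Z s0; pose W := [ffun s : {set 'I_n} => Z' s - c * Z s].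
have sW : Supp W \subset Supp Z :\ s0.
  apply/subsetP=> s; rewrite !inE ffunE.
  have [->|ss0] := eqVneq s s0; first by rewrite /c divfK // subrr eqxx.
  apply: contraNN => /eqP Zs.
  have : s \notin Supp Z by rewrite inE Zs eqxx.
  move/(contraNN (subsetP sZ' s)); rewrite inE negbK => /eqP->.
  by rewrite Zs mulr0 subr0.
have [||H [hH sH]] := IH W _ (cocycleB c cZ' cZ).
- rewrite -ltnS; apply: leq_trans hm; rewrite (cardsD1 s0 (Supp Z)) inE Zs0 add1n ltnS.
  exact: subset_leq_card.
- apply: NNPP => W0; apply: nmul; exists c => s.
  apply/eqP; apply: contraT => Z's; exfalso; apply: W0.
  by exists s; rewrite ffunE subr_eq0.
by exists H; split=> //; apply: subset_trans sH (subset_trans sW (subsetDl _ _)).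
Qed.

(* The cochain with value [sign(x |: rho, rho)] on [x |: rho] for [x \in X],
   and [0] elsewhere. *)
Definition cut_cochain rho X : {ffun {set 'I_n} -> F} :=
  [ffun f : {set 'I_n} => \sum_(x in f)
     (x \in X)%:R * simplex_sign F f x * (f :\ x == rho)%:R].

Definition cut_term rho X s p q : F :=
  simplex_sign F s p * simplex_sign F (s :\ p) q * (s :\ p :\ q == rho)%:R *
  ((q \in X)%:R - (p \in X)%:R).

Lemma coboundary_at_cut_cochain rho X s :
  coboundary_at (cut_cochain rho X) s =
  \sum_(p in s) \sum_(q in s | (q < p)%N) cut_term rho X s p q.
Proof.
rewrite /coboundary_at; under eq_bigr => p _ do rewrite ffunE mulr_sumr.
rewrite sum_ordered_pairs; apply: eq_bigr => p ps; apply: eq_bigr => q /andP[qs qp].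
rewrite /cut_term [s :\ q :\ p]setDDl setUC -setDDl.
have := simplex_sign_swap ps qs qp.
set C := simplex_sign F s q; set D := simplex_sign F (s :\ q) p.
by move/(canLR (@opprK _)) => CD; rewrite !mulrA -[C * _ * D]mulrAC -[C * D]CD; ring.
Qed.

Lemma cut_term_neq0 rho X s p q : cut_term rho X s p q != 0 ->
  s :\ p :\ q = rho /\ (p \in X) != (q \in X).
Proof.
move=> nz; split.
  by apply/eqP; apply: contraNT nz => /negbTE rho_pq; rewrite /cut_term rho_pq mulr0 mul0r.
by apply: contraNneq nz => pq; rewrite /cut_term pq subrr mulr0.
Qed.

Lemma coboundary_cut_cochain_supp (d : nat) rho X s : [disjoint X & rho] ->
  coboundary d (cut_cochain rho X) s != 0 ->
  [/\ #|s| = d.+1, rho \subset s & #|s :&: X| = 1%N].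
Proof.
move=> Xrho; rewrite ffunE; case: (#|s| =P d.+1) => [s_d|_] /=; last by rewrite eqxx.
rewrite coboundary_at_cut_cochain => /sum_neq0_exists[p ps].
case/sum_neq0_exists=> q /andP[qs qp] /cut_term_neq0[s_pq pqX].
have rho_s : rho \subset s by rewrite -s_pq; apply: subset_trans (subsetDl _ _) (subsetDl _ _).
have pq : p != q by apply: contraTneq qp => ->; rewrite ltnn.
split=> //; apply/eqP/cards1P; exists (if p \in X then p else q).
apply/setP=> x; rewrite !inE; have [->|xp] := eqVneq x p.
  by rewrite ps; move: pqX; case: (p \in X); rewrite /= ?eqxx ?(negbTE pq).
have [->|xq] := eqVneq x q.
  rewrite qs eq_sym; move: pqX.
  by case: (p \in X); case: (q \in X); rewrite /= ?eqxx ?(negbTE pq).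
have [xs|] := boolP (x \in s); last by case: ifP; rewrite ?(negbTE xp) ?(negbTE xq).
have xrho : x \in rho by rewrite -s_pq !inE xp xq.
by rewrite (disjointFl Xrho xrho); case: ifP; rewrite ?(negbTE xp) ?(negbTE xq).
Qed.

Lemma coboundary_cut_cochain_neq0 (d : nat) rho X a b :
  (a \in X) != (b \in X) -> a \notin rho -> b \notin rho -> (#|rho| + 2 = d.+1)%N ->
  coboundary d (cut_cochain rho X) (a |: (b |: rho)) != 0.
Proof.
wlog ba : a b / (b < a)%N.
  move=> hyp abX ar br rho_d; case: (ltngtP a b) => [ab|ba|/val_inj ab].
  - by rewrite setUCA; apply: hyp; rewrite // eq_sym.
  - exact: hyp.
  - by move: abX; rewrite ab eqxx.
move=> abX ar br rho_d; set s := a |: (b |: rho).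
have ab : a != b by apply: contraTneq ba => ->; rewrite ltnn.
have [a_s b_s] : a \in s /\ b \in s by rewrite !inE !eqxx orbT.
have s_ab : s :\ a :\ b = rho.
  apply/setP=> x; rewrite !inE; have [->|xa] := eqVneq x a; first by rewrite andbF (negbTE ar).
  by have [->|xb] := eqVneq x b; rewrite ?(negbTE br).
have only_ab p q : p \in s -> q \in s -> (q < p)%N -> cut_term rho X s p q != 0 ->
    p = a /\ q = b.
  move=> ps qs qp /cut_term_neq0[s_pq _].
  have [pr qr] : p \notin rho /\ q \notin rho by rewrite -s_pq !inE !eqxx andbF.
  move: ps qs; rewrite !inE (negbTE pr) (negbTE qr) !orbF.
  case/orP=> /eqP pE /orP[]/eqP qE; rewrite pE qE in qp *; split=> //.
  - by rewrite ltnn in qp.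
  - by have := ltn_trans ba qp; rewrite ltnn.
  - by have := ltn_trans ba qp; rewrite ltnn.
  - by rewrite ltnn in qp.
have s_d : #|s| = d.+1.
  by rewrite cardsU1 cardsU1 !inE (negbTE ab) (negbTE ar) br -rho_d addn2.
rewrite ffunE s_d eqxx coboundary_at_cut_cochain (bigD1 a) //= (bigD1 b) /=; last first.
  by rewrite b_s ba.
rewrite big1 => [|q /andP[/andP[qs qa] qb]]; last first.
  apply: contraNeq qb => /only_ab[] // _ ->; exact: eqxx.
rewrite addr0 big1 => [|p /andP[ps pa]]; last first.
  apply: big1 => q /andP[qs qp]; apply: contraNeq pa => /only_ab[] // -> _; exact: eqxx.
rewrite addr0 /cut_term s_ab eqxx mulr1 !mulf_neq0 ?simplex_sign_neq0 //.
by move: abX; case: (a \in X); case: (b \in X); rewrite //= ?subr0 ?sub0r ?oppr_eq0 oner_eq0.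
Qed.

Lemma cut_link_of_hypercuts (d r : nat) (K : {set {set 'I_n}}) :
  (0 < d)%N -> (d + 2 <= n)%N -> {in K, forall s, #|s| = d.+1} ->
  (forall H, is_hypercut d H -> (r <= #|Supp H :&: K|)%N) ->
  cut_link set0 setT d r K.
Proof.
move=> d0 dn Kd hH; split.
- by rewrite disjoints_subset sub0set.
- by move=> s sK; rewrite sub0set set0U subsetT cards0 add0n Kd.
- by rewrite cardsT card_ord.
move=> rho X _ _ rho_d XD X0 XnD.
have Xrho : [disjoint X & rho] by rewrite disjoints_subset -setTD.
have [a aX] := set0Pn _ X0.
have [b bD bX] : exists2 b, b \in setT :\: rho & b \notin X.
  by apply/subsetPn; apply: contra XnD => DX; rewrite eqEsubset XD DX.
have ar : a \notin rho by rewrite (disjointFr Xrho aX).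
have br : b \notin rho by move: bD; rewrite !inE andbT.
pose Z := coboundary d (cut_cochain rho X).
have Z_nz : exists s, Z s != 0.
  exists (a |: (b |: rho)); apply: coboundary_cut_cochain_neq0 => //.
    by rewrite aX (negbTE bX).
  by rewrite cards0 add0n in rho_d; rewrite addn2 -rho_d addn1.
have [H [hypH HZ]] := cocycle_hypercut (coboundary_cocycle d _) Z_nz.
apply: leq_trans (hH H hypH) (subset_leq_card _).
apply/subsetP=> s /setIP[/(subsetP HZ) + sK]; rewrite inE.
by case/(coboundary_cut_cochain_supp Xrho)=> _ rho_s sX; rewrite inE sK rho_s sX.
Qed.

End Cochains.

Theorem corollary4p5 (F : fieldType) (n d r : nat)
  (K : {set {set 'I_n}}) :
  (1 <= d)%N -> (1 <= r)%N -> (d + 2 <= n)%N ->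
  (forall s, s \in K -> #|s| = d.+1) ->
  (forall H : {ffun {set 'I_n} -> F}, is_hypercut d H ->
     (r <= #|Supp H :&: K|)%N) ->
  k_connected (@facet_adj n d) K (d + r - 1).
Proof.
move=> d0 r0 dn Kd hH; have hL := cut_link_of_hypercuts d0 dn Kd hH.
move=> S SK Sdr; split=> [|x y xKS yKS].
  have n0 : (0 < n)%N by apply: leq_trans dn; rewrite addn2.
  pose v := Ordinal n0.
  rewrite -card_gt0 cardsDS // subn_gt0; apply: leq_trans Sdr _.
  apply: leq_trans (card_star_cut_link d0 r0 hL (in_setT v)) (subset_leq_card (star_sub K v)).
by have := cut_link_connected d0 r0 hL SK Sdr xKS yKS; rewrite cards0 add0n.
Qed.
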